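(* Let $q=p^m$ with $p$ an odd prime and $m\ge 1$, let $f(x)=x^{q+2}$ on $\mathbb{F}_{q^2}$, and for $b\in\mathbb{F}_{q^2}$ let $\delta(b)=\#\{u\in\mathbb{F}_{q^2}:\ 2u^{q+1}+u^2=b\}$ (equivalently $\delta(b)=\delta_f(1,b+\tfrac14)$). Then for every $b\in\mathbb{F}_{q^2}^*$, $\delta(b)$ is even and $\delta(b)\le 4$.
   Context: $\delta_f(a,b)=\#\{x\in\mathbb{F}_{q^2}:\ f(x+a)-f(x)=b\}$. *)

From mathcomp Require Import all_boot all_order all_algebra all_field.
Set Implicit Arguments. Unset Strict Implicit. Unset Printing Implicit Defensive.
Import GRing.Theory.
Local Open Scope ring_scope.

Definition delta (F : finFieldType) (q : nat) (b : F) : nat :=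
  #|[set u : F | 2 * u ^+ q.+1 + u ^+ 2 == b]|.

From mathcomp Require Import all_boot all_order all_algebra all_field.
From mathcomp Require Import ring.
Set Implicit Arguments.
Unset Strict Implicit.
Unset Printing Implicit Defensive.
Import GRing.Theory.
Local Open Scope ring_scope.

(* Put w = u^q.  A solution u satisfies b = 2uw + u^2, and applying the
   involution x |-> x^q of F_{q^2} gives b^q = 2uw + w^2.  Eliminating w,
   every solution is a root of the nonzero quartic 3X^4 + (4b^q - 2b)X^2 - b^2,
   so delta(b) <= 4.  As q + 1 is even, u |-> -u permutes the solutions; it has
   no fixed point since 0 is not a solution (b <> 0) and 2 <> 0, so delta(b)
   is even. *)

Lemma even_card_fixfree_involution (T : finType) (f : T -> T) (S : {set T}) :
  involutive f -> {homo f : x / x \in S} -> {in S, forall x, f x != x} ->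
  ~~ odd #|S|.
Proof.
move=> fK; have [n] := ubnP #|S|; elim: n S => // n IH S ltSn fS fx_neq.
have [->|[x Sx]] := set_0Vmem S; first by rewrite cards0.
have fxS : f x \in S :\ x by rewrite !inE fx_neq ?fS.
have cardS : #|S| = (#|S :\ x :\ f x|).+2.
  by rewrite (cardsD1 x) Sx (cardsD1 (f x)) fxS.
rewrite cardS /= negbK; apply: IH => [|y|y].
- by move: ltSn; rewrite cardS ltnS => /ltnW.
- rewrite !inE => /and3P[yfx yx Sy].
  by rewrite fS // andbT (inj_eq (can_inj fK)) yx (inv_eq fK) yfx.
- by rewrite !inE => /and3P[_ _ /fx_neq].
Qed.

Lemma card_roots_lt_size (R : finIdomainType) (P : {poly R}) :
  P != 0 -> (#|[set x | root P x]| < size P)%N.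
Proof.
move=> P_neq0; rewrite cardE; apply: max_poly_roots (enum_uniq _) => //.
by apply/allP => x; rewrite mem_enum inE.
Qed.

Lemma delta_even (F : finFieldType) (q : nat) (b : F) :
  odd q -> (2 : F) != 0 -> b != 0 -> ~~ odd (delta q b).
Proof.
move=> odd_q two_neq0 b_neq0; rewrite /delta.
apply: (even_card_fixfree_involution opprK) => u.
  by rewrite !inE sqrrN exprNn -signr_odd /= odd_q /= mul1r.
rewrite inE; apply: contraTN => /eqP uN.
have : 2 * u == 0 by rewrite mulr_natl mulr2n -{1}uN addNr.
rewrite mulf_eq0 (negPf two_neq0) => /eqP u0.
by rewrite u0 !expr0n mulr0 addr0 eq_sym.
Qed.

Definition delta_quartic (R : nzRingType) (b b' : R) : {poly R} :=
  Poly [:: - b ^+ 2; 0; 4 * b' - 2 * b; 0; 3].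

Lemma delta_quartic_neq0 (R : idomainType) (b b' : R) :
  b != 0 -> delta_quartic b b' != 0.
Proof.
move=> b_neq0; apply: contra_neq b_neq0 => /(congr1 (coefp 0)) /=.
rewrite coef_Poly coef0 /= => /eqP.
by rewrite oppr_eq0 expf_eq0 => /andP[_ /eqP].
Qed.

Lemma root_delta_quartic (R : comNzRingType) (u w : R) :
  root (delta_quartic (2 * u * w + u ^+ 2) (2 * u * w + w ^+ 2)) u.
Proof. by rewrite /root horner_Poly /=; apply/eqP; ring. Qed.

Section QPowerInvolution.

Variables (F : finFieldType) (q : nat).
Hypothesis exprDq : forall x y : F, (x + y) ^+ q = x ^+ q + y ^+ q.
Hypothesis exprqK : forall x : F, x ^+ q ^+ q = x.

Lemma delta_rhs_exprq (u : F) :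
  (2 * u ^+ q.+1 + u ^+ 2) ^+ q = 2 * u * u ^+ q + u ^+ q ^+ 2.
Proof.
have two_q : (2 : F) ^+ q = 2 by rewrite -[2]/(1 + 1 : F) exprDq expr1n.
by rewrite exprDq exprS !exprMn two_q exprqK; ring.
Qed.

Lemma delta_le4 (b : F) : b != 0 -> (delta q b <= 4)%N.
Proof.
move=> b_neq0; rewrite -ltnS.
have size_quartic : (size (delta_quartic b (b ^+ q)) <= 5)%N := size_Poly _.
have roots_lt := card_roots_lt_size (delta_quartic_neq0 (b ^+ q) b_neq0).
apply: leq_trans size_quartic; apply: leq_ltn_trans roots_lt.
apply/subset_leq_card/subsetP => u; rewrite !inE => /eqP def_b.
have def_b' := delta_rhs_exprq u; rewrite def_b in def_b'.
by rewrite def_b' -def_b exprS mulrA root_delta_quartic.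
Qed.

End QPowerInvolution.

Theorem lemma8 (p m : nat) (F : finFieldType) :
  prime p -> odd p -> (0 < m)%N ->
  #|F| = ((p ^ m) ^ 2)%N ->
  forall b : F, b != 0 ->
    ~~ odd (delta (p ^ m) b) /\ (delta (p ^ m) b <= 4)%N.
Proof.
move=> p_pr odd_p _ cardF b b_neq0.
have charFp : p \in [pchar F].
  by apply: (@card_finPcharP F p (m * 2)); rewrite // expnM.
have two_neq0 : (2 : F) != 0.
  rewrite -(dvdn_pcharf charFp 2) (dvdn_prime2 p_pr) //.
  by apply: contraL odd_p => /eqP ->.
have exprDq (x y : F) : (x + y) ^+ (p ^ m) = x ^+ (p ^ m) + y ^+ (p ^ m).
  by apply: exprDn_pchar; rewrite (eq_pnat _ (pcharf_eq charFp)) pnatX pnat_id.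
have exprqK (x : F) : x ^+ (p ^ m) ^+ (p ^ m) = x.
  by rewrite -exprM mulnn -cardF expf_card.
split; last exact: delta_le4.
by apply: delta_even; rewrite // oddX odd_p orbT.
Qed.
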